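(* Let $G$ be a connected graph with $n$ vertices and $m$ edges. If $n\ge 15$ and $n+8\le m\le \min\{2n^{3/2},\binom{n}{2}\}$, then $\frac{q(G)}{R(G)}<\frac{n}{\sqrt{n-1}}$.
   Context: All graphs are finite and simple. For a vertex $u$, $d(u)$ is its degree. The Randić index is $R(G)=\sum_{\{u,v\}\in E(G)} \frac{1}{\sqrt{d(u)d(v)}}$. The signless Laplacian is $Q=D+A$ ($D$ the diagonal degree matrix, $A$ the adjacency matrix), and $q(G)$ is its largest eigenvalue. *)

From HB Require Import structures.
From mathcomp Require Import all_boot all_order all_algebra.
Set Implicit Arguments. Unset Strict Implicit. Unset Printing Implicit Defensive.
Import Order.TTheory GRing.Theory Num.Theory.
Local Open Scope ring_scope.

Definition simple_graph (n : nat) (e : rel 'I_n) : Prop :=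
  symmetric e /\ irreflexive e.

Definition connected_graph (n : nat) (e : rel 'I_n) : Prop :=
  forall x y : 'I_n, connect e x y.

Definition deg (n : nat) (e : rel 'I_n) (u : 'I_n) : nat := #|[set v | e u v]|.

Definition nedges (n : nat) (e : rel 'I_n) : nat :=
  (#|[set p : 'I_n * 'I_n | e p.1 p.2]|)./2.

(* Randic index: sum over unordered edges {u,v} of 1/sqrt(d(u) d(v));
   each unordered edge appears twice among ordered pairs, hence the 1/2 *)
Definition randic (R : rcfType) (n : nat) (e : rel 'I_n) : R :=
  2^-1 * \sum_(u : 'I_n) \sum_(v : 'I_n | e u v)
     (Num.sqrt ((deg e u)%:R * (deg e v)%:R))^-1.

Definition signless_laplacian (R : rcfType) (n : nat) (e : rel 'I_n) : 'M[R]_n :=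
  \matrix_(i, j) ((if i == j then (deg e i)%:R else 0) + (e i j)%:R).

Definition largest_eigenvalue (R : rcfType) (n : nat) (A : 'M[R]_n) (x : R) : Prop :=
  eigenvalue A x /\ forall y, eigenvalue A y -> y <= x.

(** With [K = 2m - (n - 1)] and [L = n - 1], three estimates combine.
    Weighting a Perron-type argument by degrees (maximise [|x_v| / d(v)] over
    an eigenvector [x] of [Q]) gives a vertex [u] with
    [q d(u) <= d(u)^2 + S(u)], where [S(u)] is the sum of the degrees of the
    neighbours of [u]; since [S(u) <= min (K, d(u) L)] this yields
    [q L <= K + L^2].  The tangent-line bound [k/s >= 3/2 - s^2/(2k^2)] applied
    to [s = sqrt (d(u) d(v))], [k = sqrt K] gives [m <= sqrt K R(G)].  Finally
    a polynomial inequality in [n] and [m], valid in the stated range, shows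
    [(K + L^2)^2 K < n^2 L m^2], i.e. [q sqrt K sqrt L < n m <= n sqrt K R(G)]. *)
From HB Require Import structures.
From mathcomp Require Import all_boot all_order all_algebra.
From mathcomp Require Import ring lra zify.
Import Order.TTheory GRing.Theory Num.Theory.

Set Implicit Arguments.
Unset Strict Implicit.
Unset Printing Implicit Defensive.

Section GraphDegrees.

Variables (n : nat) (e : rel 'I_n).

Definition nbr_degsum (u : 'I_n) : nat := \sum_v (e u v : nat) * deg e v.

Lemma degE u : deg e u = (\sum_v (e u v : nat))%N.
Proof.
rewrite /deg -sum1_card big_mkcond /=; apply: eq_bigr => v _.
by rewrite inE; case: (e u v).
Qed.

Hypotheses (e_sym : symmetric e) (e_irr : irreflexive e).

Lemma sum_deg : (\sum_u deg e u = 2 * nedges e)%N.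
Proof.
have split_pair u v :
    (e u v : nat) = ((e u v && (u < v)%N) : nat) + ((e v u && (v < u)%N) : nat).
  rewrite (e_sym v u); case: (ltngtP u v) => [||/val_inj ->].
  - by case: (e u v).
  - by case: (e u v).
  - by rewrite e_irr.
have pairs_even : (\sum_u \sum_v (e u v : nat) =
                   2 * \sum_u \sum_v ((e u v && (u < v)%N) : nat))%N.
  under eq_bigr do under eq_bigr do rewrite split_pair.
  under eq_bigr do rewrite big_split /=.
  by rewrite big_split /= exchange_big /= mul2n -addnn.
have card_pairs :
    #|[set p : 'I_n * 'I_n | e p.1 p.2]| = (\sum_u \sum_v (e u v : nat))%N.
  rewrite -sum1_card big_mkcond /= pair_big /=; apply: eq_bigr => p _.
  by rewrite inE; case: (e p.1 p.2).
under eq_bigr do rewrite degE.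
by rewrite /nedges card_pairs pairs_even !mul2n doubleK.
Qed.

Lemma deg_le_pred u : (deg e u <= n.-1)%N.
Proof.
rewrite -[n in n.-1]card_ord -(cardsC1 u); apply: subset_leq_card.
by apply/subsetP => v; rewrite !inE; apply: contraTneq => ->; rewrite e_irr.
Qed.

Lemma nbr_degsum_le_deg u : (nbr_degsum u <= deg e u * n.-1)%N.
Proof.
rewrite degE big_distrl /=; apply: leq_sum => v _.
by case: (e u v); rewrite ?mul1n ?mul0n // deg_le_pred.
Qed.

Hypotheses (e_conn : connected_graph e) (n_gt1 : (1 < n)%N).

Lemma deg_gt0 u : (0 < deg e u)%N.
Proof.
pose v : 'I_n := if val u == 0%N then Ordinal n_gt1 else Ordinal (ltnW n_gt1).
have v_neq_u : v != u.
  by rewrite /v; case: (val u =P 0%N) => u0; apply/eqP => vu; move: u0; rewrite -vu /=; lia.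
have /connectP [[|w p] /= uvp vE] := e_conn u v; first by rewrite vE eqxx in v_neq_u.
case/andP: uvp => euw _.
by rewrite degE (bigD1 w) //= euw.
Qed.

(* [sum_v d(v)] counts [d(v)] for each neighbour of [u] and at least [1] for
   each of the remaining vertices other than [u]. *)
Lemma nbr_degsum_add_le u : (nbr_degsum u + n.-1 <= 2 * nedges e)%N.
Proof.
rewrite -sum_deg.
have pointwise : (\sum_v ((v == u) * deg e u + (e u v : nat) * deg e v + (v != u : nat))
                  <= \sum_v (deg e v + (e u v : nat)))%N.
  apply: leq_sum => v _; case: (eqVneq v u) => [->|_]; first by rewrite e_irr /=; lia.
  by case: (e u v) => /=; have := deg_gt0 v; lia.
have sum_delta : (\sum_v (v == u) * deg e u = deg e u)%N.
  by rewrite (bigD1 u) //= eqxx big1 ?addn0 ?mul1n // => v /negbTE ->.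
have sum_neq : (\sum_v (v != u : nat) = n.-1)%N.
  rewrite -[in RHS](card_ord n) -(cardsC1 u) -sum1_card [RHS]big_mkcond /=.
  by apply: eq_bigr => v _; rewrite !inE; case: (v != u).
rewrite !big_split /= sum_delta sum_neq -degE in pointwise.
by move: pointwise; rewrite -addnA addnC leq_add2r.
Qed.

Local Open Scope ring_scope.

Lemma tangent_inv (R : realFieldType) (k s : R) : 0 < k -> 0 < s ->
  3 / 2 - s ^+ 2 / (2 * k ^+ 2) <= k / s.
Proof.
move=> k_gt0 s_gt0; rewrite -subr_ge0.
have -> : k / s - (3 / 2 - s ^+ 2 / (2 * k ^+ 2)) =
          (k - s) ^+ 2 * (2 * k + s) / (2 * k ^+ 2 * s).
  by field; rewrite !gt_eqF.
have den_gt0 : 0 < 2 * k ^+ 2 * s by rewrite !mulr_gt0 ?exprn_gt0.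
by rewrite divr_ge0 ?(ltW den_gt0) // mulr_ge0 ?sqr_ge0 //; lra.
Qed.

Variable R : rcfType.

Lemma signless_eigenvalue_vertex_bound q : eigenvalue (signless_laplacian R e) q ->
  exists u, q * (deg e u)%:R <= (deg e u)%:R ^+ 2 + (nbr_degsum u)%:R.
Proof.
case/eigenvalueP => x x_eig x_neq0.
have dpos j : 0 < (deg e j)%:R :> R by rewrite ltr0n deg_gt0.
pose f j := `|x ord0 j| / (deg e j)%:R.
have [i _ f_max] := @arg_maxP _ R _ (Ordinal (ltnW n_gt1)) xpredT f isT.
pose c := f i.
have x_le j : `|x ord0 j| <= c * (deg e j)%:R by rewrite -ler_pdivrMr //; apply: f_max.
have xiE : `|x ord0 i| = c * (deg e i)%:R by rewrite /c /f divfK // gt_eqF.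
have c_gt0 : 0 < c.
  rewrite lt_def divr_ge0 // andbT; apply: contra x_neq0 => /eqP c0.
  apply/eqP/matrixP => a j; rewrite (ord1 a) !mxE; apply/normr0_eq0.
  by apply/eqP; rewrite eq_le normr_ge0 andbT -(mul0r (deg e j)%:R) -c0 x_le.
have col_i : \sum_j x ord0 j * signless_laplacian R e j i =
              x ord0 i * (deg e i)%:R + \sum_j x ord0 j * (e i j)%:R.
  rewrite /signless_laplacian; under eq_bigr do rewrite mxE mulrDr.
  rewrite big_split /= (bigD1 i) //= eqxx big1 ?addr0; last first.
    by move=> j /negbTE ->; rewrite mulr0.
  by congr (_ + _); apply: eq_bigr => j _; rewrite (e_sym j i).
have row_i : q * x ord0 i = x ord0 i * (deg e i)%:R + \sum_j x ord0 j * (e i j)%:R.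
  by rewrite -col_i; have := congr1 (fun M : 'rV_n => M ord0 i) x_eig; rewrite !mxE.
have : q * `|x ord0 i| <= `|x ord0 i| * (deg e i)%:R + c * (nbr_degsum i)%:R.
  apply: (@le_trans _ _ `|q * x ord0 i|); first by rewrite normrM ler_wpM2r ?ler_norm.
  rewrite row_i; apply: (le_trans (ler_normD _ _)).
  rewrite normrM (@ger0_norm _ (deg e i)%:R) // lerD2l.
  apply: (le_trans (ler_norm_sum _ _ _)).
  rewrite natr_sum mulr_sumr; apply: ler_sum => j _.
  by case: (e i j); rewrite /= ?mul1n ?mul0n ?mulr1 ?mulr0 ?normr0 ?mul0r // natrM mulrA.
rewrite xiE => H; exists i; rewrite -(ler_pM2l c_gt0) mulrDr expr2; nra.
Qed.

Definition edge_weight (u v : 'I_n) : R := (Num.sqrt ((deg e u)%:R * (deg e v)%:R))^-1.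

Lemma nedges_le_randic : (n.-1 < 2 * nedges e)%N ->
  (nedges e)%:R <= Num.sqrt (2 * (nedges e)%:R - (n.-1)%:R) * randic R e.
Proof.
move=> pred_lt; set K : R := _ - _; set k := Num.sqrt K.
have K_gt0 : 0 < K by rewrite subr_gt0 -natrM ltr_nat.
have k_gt0 : 0 < k by rewrite sqrtr_gt0.
have kK : k ^+ 2 = K by rewrite sqr_sqrtr // ltW.
have dpos j : 0 < (deg e j)%:R :> R by rewrite ltr0n deg_gt0.
have vertex_bound u : (deg e u)%:R <= k * \sum_(v | e u v) edge_weight u v.
  set d := (deg e u)%:R; pose S : R := (nbr_degsum u)%:R.
  have S_le_K : S <= K.
    by have := nbr_degsum_add_le u; rewrite -(ler_nat R) natrD natrM /K /S; lra.
  have sum_tangents : \sum_(v | e u v) (3 / 2 - d * (deg e v)%:R / (2 * K)) =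
                      3 / 2 * d - d * S / (2 * K).
    rewrite sumrB; congr (_ - _).
      rewrite /d degE natr_sum mulr_sumr [LHS]big_mkcond; apply: eq_bigr => v _.
      by case: (e u v); rewrite /= ?mulr1 ?mulr0.
    rewrite /S /nbr_degsum natr_sum mulr_sumr mulr_suml [LHS]big_mkcond.
    by apply: eq_bigr => v _; case: (e u v); rewrite /= ?mul1n ?mul0n ?mulr0 ?mul0r.
  have S_half : d * S / (2 * K) <= d / 2.
    have -> : d / 2 = d * K / (2 * K) by field; rewrite gt_eqF.
    by rewrite ler_pM2r ?invr_gt0 ?mulr_gt0 // ler_pM2l ?dpos.
  apply: (@le_trans _ _ (\sum_(v | e u v) (3 / 2 - d * (deg e v)%:R / (2 * K)))).
    by rewrite sum_tangents; lra.
  rewrite mulr_sumr; apply: ler_sum => v _.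
  rewrite -(sqr_sqrtr (ltW (mulr_gt0 (dpos u) (dpos v)))) -kK.
  by apply: tangent_inv; rewrite ?sqrtr_gt0 ?mulr_gt0.
have : (2 * nedges e)%:R <= k * \sum_u \sum_(v | e u v) edge_weight u v.
  by rewrite -sum_deg natr_sum mulr_sumr; apply: ler_sum => u _; apply: vertex_bound.
by rewrite /randic natrM; lra.
Qed.

End GraphDegrees.

Local Open Scope ring_scope.

(* Either [S <= d L] is the active constraint (then [q <= d + L]), or
   [S <= K] is, and [(d - L) (d L - K) <= 0] converts [d^2 + K] into the bound. *)
Lemma eigen_degree_ineq (R : realFieldType) (q d S K L : R) :
  1 <= d -> d <= L -> S <= K -> S <= d * L -> q * d <= d ^+ 2 + S ->
  q * L <= K + L ^+ 2.
Proof.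
move=> d_ge1 d_le S_le_K S_le_dL qd_le.
have d_gt0 : 0 < d by lra.
case: (lerP (d * L) K) => [dL_le | K_lt].
  have : d * q <= d * (d + L) by nra.
  by rewrite ler_pM2l // => q_le; nra.
have : (d - L) * (d * L - K) <= 0 by apply: mulr_le0_ge0; lra.
have : q * d * L <= (d ^+ 2 + K) * L by apply: ler_wpM2r; lra.
by move=> h1 h2; rewrite -(ler_pM2l d_gt0); nra.
Qed.

Lemma edge_range_ineq (R : rcfType) (N M : R) :
  15 <= N -> N + 8 <= M -> M <= 2 * (N * Num.sqrt N) ->
  (2 * M - (N - 1) + (N - 1) ^+ 2) ^+ 2 * (2 * M - (N - 1)) < N ^+ 2 * (N - 1) * M ^+ 2.
Proof.
move=> N_ge M_ge M_le.
have M2_le : M ^+ 2 <= 4 * N ^+ 3.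
  have sqrtN2 : Num.sqrt N ^+ 2 = N by rewrite sqr_sqrtr //; lra.
  have : M ^+ 2 <= (2 * (N * Num.sqrt N)) ^+ 2.
    by rewrite ler_sqr ?nnegrE ?mulr_ge0 ?sqrtr_ge0 //; lra.
  have -> : (2 * (N * Num.sqrt N)) ^+ 2 = 4 * N ^+ 2 * Num.sqrt N ^+ 2 by ring.
  by rewrite sqrtN2 -mulrA -exprSr.
set G := N ^+ 3 - 9 * N ^+ 2 + 12 * N - 148.
have N9_ge0 : 0 <= N ^+ 2 * (N - 9) by apply: mulr_ge0; nra.
have G_ge : N ^+ 2 * (N - 9) <= G by rewrite /G; nra.
have N3_le : 256 * N ^+ 3 <= (N ^+ 2 * (N - 9)) ^+ 2.
  have -> : (N ^+ 2 * (N - 9)) ^+ 2 = N ^+ 3 * (N * (N - 9) ^+ 2) by ring.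
  by rewrite mulrC ler_wpM2l ?exprn_ge0; nra.
have M8_le : 8 * M <= G.
  have G2 : (N ^+ 2 * (N - 9)) ^+ 2 <= G ^+ 2 by rewrite ler_sqr // nnegrE; lra.
  by rewrite -ler_sqr ?nnegrE; lra.
(* Expand around [M = N + 8]: all three coefficients are positive for [N >= 15]. *)
set t := M - N - 8.
have t_ge0 : 0 <= t by rewrite /t; lra.
have c2_ge0 : 0 <= (N ^+ 3 - 9 * N ^+ 2 + 4 * N - 212) - 8 * t by move: M8_le; rewrite /t /G; lra.
have c0_gt0 : 0 < 45 * N ^+ 3 - 657 * N ^+ 2 + 288 * N - 5508 by nra.
have c1_gt0 : 0 < 14 * N ^+ 3 - 154 * N ^+ 2 + 68 * N - 1872 by nra.
rewrite -subr_gt0.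
have -> : N ^+ 2 * (N - 1) * M ^+ 2 -
          (2 * M - (N - 1) + (N - 1) ^+ 2) ^+ 2 * (2 * M - (N - 1)) =
  (45 * N ^+ 3 - 657 * N ^+ 2 + 288 * N - 5508)
  + (14 * N ^+ 3 - 154 * N ^+ 2 + 68 * N - 1872) * t
  + t ^+ 2 * ((N ^+ 3 - 9 * N ^+ 2 + 4 * N - 212) - 8 * t) by rewrite /t; ring.
have : 0 <= t ^+ 2 * ((N ^+ 3 - 9 * N ^+ 2 + 4 * N - 212) - 8 * t).
  by rewrite mulr_ge0 ?sqr_ge0.
have : 0 <= (14 * N ^+ 3 - 154 * N ^+ 2 + 68 * N - 1872) * t by rewrite mulr_ge0 //; lra.
lra.
Qed.

Lemma ratio_lt_of_bounds (R : rcfType) (N M q Rd : R) :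
  1 < N -> 0 < M -> M <= Num.sqrt (2 * M - (N - 1)) * Rd ->
  q * (N - 1) <= 2 * M - (N - 1) + (N - 1) ^+ 2 ->
  (2 * M - (N - 1) + (N - 1) ^+ 2) ^+ 2 * (2 * M - (N - 1)) < N ^+ 2 * (N - 1) * M ^+ 2 ->
  q / Rd < N / Num.sqrt (N - 1).
Proof.
set K := 2 * M - (N - 1); set L := N - 1; set k := Num.sqrt K; set r := Num.sqrt L.
move=> N_gt1 M_gt0 M_le q_le poly_lt.
have kRd_gt0 : 0 < k * Rd by apply: lt_le_trans M_le.
have k_gt0 : 0 < k.
  by rewrite lt_def sqrtr_ge0 andbT; apply: contraTneq kRd_gt0 => ->; rewrite mul0r ltxx.
have Rd_gt0 : 0 < Rd by rewrite pmulr_rgt0 in kRd_gt0.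
have kK : k ^+ 2 = K by rewrite sqr_sqrtr // ltW // -sqrtr_gt0.
have L_gt0 : 0 < L by rewrite /L subr_gt0.
have r_gt0 : 0 < r by rewrite sqrtr_gt0.
have rL : r ^+ 2 = L by rewrite sqr_sqrtr // ltW.
rewrite ltr_pdivrMr // mulrAC ltr_pdivlMr //.
have [q_le0 | q_gt0] := lerP q 0.
  by apply: le_lt_trans (_ : 0 < N * Rd); rewrite ?pmulr_lle0 ?mulr_gt0 //; lra.
have qkr_lt : q * k * r < N * M.
  have sq_lt : (q * k * r) ^+ 2 * L < (N * M) ^+ 2 * L.
    have -> : (q * k * r) ^+ 2 * L = (q * L) ^+ 2 * K by rewrite -kK -rL; ring.
    have qL2 : (q * L) ^+ 2 <= (K + L ^+ 2) ^+ 2 by rewrite ler_sqr ?nnegrE; nra.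
    apply: le_lt_trans (ler_wpM2r _ qL2) _; first by rewrite -kK sqr_ge0.
    by have -> : (N * M) ^+ 2 * L = N ^+ 2 * L * M ^+ 2 by ring.
  rewrite ltr_pM2r // ltr_sqr ?nnegrE in sq_lt => //; rewrite ?mulr_ge0 //; lra.
by rewrite -(ltr_pM2l k_gt0); nra.
Qed.

Theorem lemma3p1 (R : rcfType) (n : nat) (e : rel 'I_n) (q : R) :
  simple_graph e -> connected_graph e ->
  (15 <= n)%N ->
  (n + 8 <= nedges e)%N ->
  (nedges e)%:R <= 2 * (n%:R * Num.sqrt n%:R) :> R ->
  (nedges e <= 'C(n, 2))%N ->
  largest_eigenvalue (signless_laplacian R e) q ->
  q / randic R e < n%:R / Num.sqrt (n.-1)%:R.
Proof.
move=> [e_sym e_irr] e_conn n_ge15 m_ge m_le _ [q_eig _].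
have n_gt1 : (1 < n)%N by lia.
have predE : (n.-1)%:R = n%:R - 1 :> R by rewrite -subn1 natrB // ltnW.
have [u qd_le] := signless_eigenvalue_vertex_bound e_sym e_conn n_gt1 q_eig.
rewrite predE; apply: (@ratio_lt_of_bounds _ _ (nedges e)%:R).
- by rewrite ltr1n.
- by rewrite ltr0n; lia.
- by rewrite -predE nedges_le_randic //; lia.
- apply: (eigen_degree_ineq _ _ _ _ qd_le); rewrite -?predE -?natrM ?ler_nat.
  + by rewrite ler1n deg_gt0.
  + exact: deg_le_pred.
  + by rewrite lerBrDr -natrD ler_nat nbr_degsum_add_le.
  + exact: nbr_degsum_le_deg.
- by apply: edge_range_ineq; rewrite ?(ler_nat R 15) -?natrD ?ler_nat.
Qed.
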